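(* Let $A\in\mathbb R^{N\times N}$ be a non-singular $M$-matrix and let $p<1$. If $x\in\mathbb R^N$ with $x>0$ satisfies $Ax\le x^p$ and $y\in\mathbb R^N$ with $y>0$ satisfies $Ay\ge y^p$, then $x\le y$. In particular, the equation $Ax=x^p$ has a unique solution $x\in\mathbb R^N$ with $x>0$.
   Context: Inequalities between vectors/matrices are componentwise; for $x\in(0,\infty)^N$, $x^p:=(x_1^p,\dots,x_N^p)^\top$. A matrix $A\in\mathbb R^{N\times N}$ is a $Z$-matrix if $A_{ij}\le 0$ for all $i\neq j$. A $Z$-matrix $A$ is an $M$-matrix if $A=s\,\mathrm{Id}-B$ for some matrix $B\ge 0$ and some $s\in\mathbb R$ with $s\ge\rho(B)$ ($\rho(B)$ the spectral radius); it is a non-singular $M$-matrix if in addition it is invertible. *)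

From HB Require Import structures.
From mathcomp Require Import all_boot all_order all_algebra.
From mathcomp Require Import complex.
From mathcomp Require Import all_classical all_reals all_analysis.
Set Implicit Arguments. Unset Strict Implicit. Unset Printing Implicit Defensive.
Import Order.TTheory GRing.Theory Num.Theory ComplexField.
Local Open Scope ring_scope.
Local Open Scope classical_set_scope.

Definition vle (R : realType) (N : nat) (x y : 'cV[R]_N) : Prop :=
  forall i, x i 0 <= y i 0.

Definition vpos (R : realType) (N : nat) (x : 'cV[R]_N) : Prop :=
  forall i, 0 < x i 0.

Definition vpow (R : realType) (N : nat) (x : 'cV[R]_N) (p : R) : 'cV[R]_N :=
  map_mx (fun a => a `^ p) x.

Definition cmodulus (R : realType) (z : R[i]) : R :=
  Num.sqrt (complex.Re z ^+ 2 + complex.Im z ^+ 2).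

Definition spectral_radius (R : realType) (N : nat) (B : 'M[R]_N) : R :=
  sup [set r : R | exists l : R[i],
         eigenvalue (map_mx (fun a : R => (a%:C)%C) B) l /\ r = cmodulus l].

Definition Zmatrix (R : realType) (N : nat) (A : 'M[R]_N) : Prop :=
  forall i j, i != j -> A i j <= 0.

Definition Mmatrix (R : realType) (N : nat) (A : 'M[R]_N) : Prop :=
  Zmatrix A /\
  exists (s : R) (B : 'M[R]_N),
    (forall i j, 0 <= B i j) /\ A = s%:M - B /\ spectral_radius B <= s.

Definition nonsingular_Mmatrix (R : realType) (N : nat) (A : 'M[R]_N) : Prop :=
  Mmatrix A /\ A \in unitmx.

(* Comparison is a maximum-ratio argument: if t = max_j x_j / y_j > 1 is
   attained at k, the sign pattern of the Z-matrix A gives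
   t (Ay)_k <= (Ax)_k <= x_k^p = t^p y_k^p <= t^p (Ay)_k, i.e. t <= t^p,
   which is impossible for p < 1.

   For existence, a nonsingular M-matrix is semipositive (Av > 0 for some
   v > 0); small and large multiples of v are a sub- and a supersolution, and
   the componentwise supremum of all subsolutions is a solution: it is a
   subsolution by continuity, and a strict row inequality would let one raise
   that component to a larger subsolution.  Semipositivity of A is obtained by
   decreasing t in A + tI: it holds for t large, is open in t, and survives at
   the infimum because A + tI stays invertible for t >= 0 (by the
   spectral-radius condition) and nonnegativity of (A + (t+h)I)^-1 1 passes
   to the limit h -> 0. *)

From HB Require Import structures.
From mathcomp Require Import all_boot all_order all_algebra.
From mathcomp Require Import complex.
From mathcomp Require Import all_classical all_reals all_analysis.
From mathcomp Require Import lra.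
Set Implicit Arguments. Unset Strict Implicit. Unset Printing Implicit Defensive.
Import Order.TTheory GRing.Theory Num.Theory.
Local Open Scope ring_scope.
Import numFieldNormedType.Exports.

Section FiniteBounds.
Variables (R : realType) (N : nat).

Lemma ler_sum_term (F : 'I_N -> R) k : (forall j, 0 <= F j) -> F k <= \sum_j F j.
Proof. by move=> F_ge0; rewrite (bigD1 k) //= lerDl sumr_ge0. Qed.

Lemma exists_gt_all (f : 'I_N -> R) : exists2 K, 0 < K & forall i, f i < K.
Proof.
have sum_ge0 : 0 <= \sum_i `|f i| by apply: sumr_ge0.
exists (1 + \sum_i `|f i|) => [|i]; first lra.
have := ler_sum_term i (fun j => normr_ge0 (f j)).
have := ler_norm (f i); lra.
Qed.

Lemma exists_pos_lt_all (f : 'I_N -> R) :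
  (forall i, 0 < f i) -> exists2 e, 0 < e & forall i, e < f i.
Proof.
move=> f_gt0; have [K K_gt0 fK] := exists_gt_all (fun i => (f i)^-1).
exists K^-1 => [|i]; first by rewrite invr_gt0.
by rewrite -[f i]invrK ltf_pV2 ?posrE ?invr_gt0.
Qed.

End FiniteBounds.

Section Semipositive.
Variables (R : realType) (N : nat).

Definition semipositive (C : 'M[R]_N) := exists2 v, vpos v & vpos (C *m v).

Lemma mulmxDscalar (C : 'M[R]_N) (t : R) (v : 'cV[R]_N) i :
  ((C + t%:M) *m v) i 0 = (C *m v) i 0 + t * v i 0.
Proof. by rewrite mulmxDl mul_scalar_mx !mxE. Qed.

Lemma semipositiveDscalar (C : 'M[R]_N) (t : R) :
  semipositive C -> 0 <= t -> semipositive (C + t%:M).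
Proof.
move=> [v vp Cvp] t_ge0; exists v => // i; rewrite mulmxDscalar.
by rewrite ltr_wpDr ?Cvp // mulr_ge0 // (ltW (vp i)).
Qed.

Lemma semipositiveBscalar (C : 'M[R]_N) :
  semipositive C -> exists2 e, 0 < e & semipositive (C - e%:M).
Proof.
move=> [v vp Cvp].
have [e e_gt0 e_lt] := exists_pos_lt_all (fun i => divr_gt0 (Cvp i) (vp i)).
exists e => //; exists v => // i; rewrite -raddfN mulmxDscalar mulNr subr_gt0.
by rewrite -ltr_pdivlMr ?e_lt.
Qed.

Lemma semipositiveDscalar_large (C : 'M[R]_N) :
  exists2 t, 0 <= t & semipositive (C + t%:M).
Proof.
set one : 'cV[R]_N := const_mx 1.
have [t t_gt0 tC] := exists_gt_all (fun i => - (C *m one) i 0).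
exists t; first exact: ltW.
exists one => i; first by rewrite mxE.
by rewrite mulmxDscalar [one i 0]mxE mulr1; have := tC i; lra.
Qed.

End Semipositive.

Section ZMatrix.
Variables (R : realType) (N : nat) (C : 'M[R]_N).
Hypothesis ZC : Zmatrix C.

Lemma Zmatrix_mulmx_le_diag (d : 'cV[R]_N) k :
  (forall j, j != k -> 0 <= d j 0) -> (C *m d) k 0 <= C k k * d k 0.
Proof.
move=> d_ge0; rewrite mxE (bigD1 k) //= gerDl.
by apply: sumr_le0 => j jk; rewrite mulr_le0_ge0 ?d_ge0 ?ZC // eq_sym.
Qed.

Lemma Zmatrix_mulmx_le0 (d : 'cV[R]_N) k :
  (forall j, 0 <= d j 0) -> d k 0 = 0 -> (C *m d) k 0 <= 0.
Proof.
move=> d_ge0 dk0.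
by have := @Zmatrix_mulmx_le_diag d k (fun j _ => d_ge0 j); rewrite dk0 mulr0.
Qed.

Lemma Zmatrix_max_ratio (v x : 'cV[R]_N) (i0 : 'I_N) : vpos v ->
  exists t k, [/\ forall j, x j 0 <= t * v j 0, x k 0 = t * v k 0
                & t * (C *m v) k 0 <= (C *m x) k 0].
Proof.
move=> vp.
case: (@arg_maxP _ R _ i0 xpredT (fun j => x j 0 / v j 0) erefl) => k _ kmax.
set t := x k 0 / v k 0 in kmax; exists t, k.
have xt j : x j 0 <= t * v j 0 by rewrite -ler_pdivrMr; [exact: kmax | exact: vp].
have xkt : x k 0 = t * v k 0 by rewrite /t divfK ?gt_eqF.
split=> //; rewrite -subr_le0.
have -> : t * (C *m v) k 0 - (C *m x) k 0 = (C *m (t *: v - x)) k 0.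
  by rewrite mulmxBr -scalemxAr !mxE.
apply: Zmatrix_mulmx_le0 => [j|]; rewrite !mxE ?subr_ge0 ?xt //.
by rewrite xkt subrr.
Qed.

Lemma Zmatrix_semipositive_ge0 (z : 'cV[R]_N) : semipositive C ->
  (forall i, 0 <= (C *m z) i 0) -> forall i, 0 <= z i 0.
Proof.
move=> [v vp Cvp] Cz_ge0 i.
have [t [k [zt _ tC]]] := Zmatrix_max_ratio (- z) i vp.
have t_le0 : t <= 0.
  rewrite -(pmulr_lle0 _ (Cvp k)).
  by apply: le_trans tC _; rewrite mulmxN mxE oppr_le0.
have := zt i; rewrite mxE; have := vp i; nra.
Qed.

Lemma Zmatrix_semipositive_unit : semipositive C -> C \in unitmx.
Proof.
move=> Csp; apply: contraT; rewrite unitmxE unitfE negbK -det_tr.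
case/det0P=> u u_neq0 uC; case/eqP: u_neq0; rewrite -[u]trmxK.
have ker_ge0 (z : 'cV[R]_N) : C *m z = 0 -> forall i, 0 <= z i 0.
  by move=> Cz; apply: (Zmatrix_semipositive_ge0 Csp) => i; rewrite Cz mxE.
have Cu : C *m u^T = 0 by rewrite -[C]trmxK -trmx_mul uC trmx0.
have CNu : C *m - u^T = 0 by rewrite mulmxN Cu oppr0.
apply/matrixP => i j; rewrite (ord1 i) !mxE; apply/eqP; rewrite eq_le.
have := ker_ge0 _ Cu j; have := ker_ge0 _ CNu j.
by rewrite !mxE oppr_ge0 => -> ->.
Qed.

Lemma Zmatrix_semipositive_invmx_ge0 (b : 'cV[R]_N) : semipositive C ->
  (forall i, 0 <= b i 0) -> forall i, 0 <= (invmx C *m b) i 0.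
Proof.
move=> Csp b_ge0; apply: (Zmatrix_semipositive_ge0 Csp) => i.
by rewrite mulmxA mulmxV ?mul1mx ?b_ge0 ?Zmatrix_semipositive_unit.
Qed.

Lemma Zmatrix_invmx_ge0_semipositive : C \in unitmx ->
  (forall i, 0 <= (invmx C *m (const_mx 1 : 'cV[R]_N)) i 0) -> semipositive C.
Proof.
move=> Cu w_ge0; set w := invmx C *m _ in w_ge0.
have Cw : C *m w = const_mx 1 by rewrite mulmxA mulmxV ?mul1mx.
exists w => i; last by rewrite Cw mxE.
rewrite lt_def w_ge0 andbT; apply/eqP => wi0.
by have := Zmatrix_mulmx_le0 w_ge0 wi0; rewrite Cw mxE ler10.
Qed.

Lemma Zmatrix_addscalar (t : R) : Zmatrix (C + t%:M).
Proof. by move=> i j ij; rewrite !mxE (negbTE ij) mulr0n addr0 ZC. Qed.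

End ZMatrix.

Lemma ge0_of_small_lower_bounds (R : realType) (a K d : R) : 0 < d ->
  (forall h, 0 < h -> h <= d -> - (K * h) <= a) -> 0 <= a.
Proof.
move=> d_gt0 Kh_le; rewrite leNgt; apply/negP => a_lt0.
have K1_gt0 : 0 < `|K| + 1 by rewrite ltr_pwDr.
set h := Num.min d (- a / (`|K| + 1)).
have h_gt0 : 0 < h by rewrite lt_min d_gt0 divr_gt0 // oppr_gt0.
have h_le : h <= - a / (`|K| + 1) by rewrite ge_min lexx orbT.
have := Kh_le h h_gt0 ltac:(by rewrite ge_min lexx).
rewrite ler_pdivlMr // in h_le.
have := ler_norm K; have := normr_ge0 K; nra.
Qed.

Section InversePerturbation.
Variables (R : realType) (N : nat).

Definition vnorm1 (z : 'cV[R]_N) := \sum_i `|z i 0|.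
Definition mxnorm1 (B : 'M[R]_N) := \sum_i \sum_j `|B i j|.

Lemma normr_mulmx_le (B : 'M[R]_N) (z : 'cV[R]_N) i :
  `|(B *m z) i 0| <= mxnorm1 B * vnorm1 z.
Proof.
rewrite mxE /vnorm1 mulr_sumr; apply: le_trans (ler_norm_sum _ _ _) _.
apply: ler_sum => j _; rewrite normrM ler_wpM2r //.
apply: le_trans (ler_sum_term i (fun i => sumr_ge0 _ (fun j _ => normr_ge0 (B i j)))).
exact: ler_sum_term.
Qed.

(* From (C + h)w_h = b one gets C^-1 b = w_h + h C^-1 w_h, where w_h >= 0 and
   |w_h|_1 <= 2 |C^-1 b|_1 once h is small. *)
Lemma invmx_mulmx_ge0_limit (C : 'M[R]_N) (b : 'cV[R]_N) : C \in unitmx ->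
  (forall h, 0 < h -> exists2 w : 'cV[R]_N, (forall i, 0 <= w i 0) & (C + h%:M) *m w = b) ->
  forall i, 0 <= (invmx C *m b) i 0.
Proof.
move=> Cu near_sol i.
set Ci := invmx C; set M := mxnorm1 Ci; set L := vnorm1 (Ci *m b).
have M_ge0 : 0 <= M by apply: sumr_ge0 => k _; apply: sumr_ge0.
have NM_ge0 : 0 <= N%:R * M by rewrite mulr_ge0.
apply: (@ge0_of_small_lower_bounds _ _ (2 * M * L) (2 * (N%:R * M + 1))^-1).
  by rewrite invr_gt0 mulr_gt0 // ltr_wpDl.
move=> h h_gt0 h_le.
have [w w_ge0 Chw] := near_sol h h_gt0.
have wE : Ci *m b = w + h *: (Ci *m w).
  by rewrite -Chw mulmxA mulmxDr mulVmx // mul_mx_scalar mulmxDl mul1mx scalemxAl.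
have CibE j : (Ci *m b) j 0 = w j 0 + h * (Ci *m w) j 0 by rewrite wE !mxE.
have Ciw_le j : h * `|(Ci *m w) j 0| <= h * (M * vnorm1 w).
  by rewrite ler_pM2l // normr_mulmx_le.
have w_le : vnorm1 w <= L + N%:R * (h * (M * vnorm1 w)).
  rewrite mulr_natl -[X in _ *+ X](card_ord N) -sumr_const -big_split /=.
  apply: ler_sum => j _.
  have -> : w j 0 = (Ci *m b) j 0 - h * (Ci *m w) j 0 by rewrite CibE addrK.
  apply: le_trans (ler_normB _ _) _.
  by rewrite lerD2l normrM gtr0_norm // Ciw_le.
have wnorm_ge0 : 0 <= vnorm1 w by apply: sumr_ge0.
have hNM : h * (2 * (N%:R * M + 1)) <= 1.
  by rewrite -ler_pdivlMr ?mul1r // mulr_gt0 // ltr_wpDl.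
have w_bound : vnorm1 w <= 2 * L by nra.
have := ler_norm (- (h * (Ci *m w) i 0)); rewrite normrN normrM gtr0_norm //.
have : h * (M * vnorm1 w) <= h * (M * (2 * L)) by rewrite ler_pM2l // ler_wpM2l.
have := Ciw_le i; have := w_ge0 i; rewrite CibE; lra.
Qed.

End InversePerturbation.

Section SpectralRadius.
Variables (R : realType) (N : nat).

Lemma spectral_moduli_bounded (B : 'M[R]_N) :
  has_ubound [set r : R | exists l : R[i],
    eigenvalue (map_mx (fun a : R => (a%:C)%C) B) l /\ r = cmodulus l].
Proof.
have [rs rsE] := closed_field_poly_normal (char_poly (map_mx (fun a : R => (a%:C)%C) B)).
exists (\sum_(z <- rs) cmodulus z) => r [l [ev ->]].
have l_rs : l \in rs.
  rewrite -root_prod_XsubC; move: ev.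
  by rewrite eigenvalue_root_char rsE (monicP (char_poly_monic _)) scale1r.
by rewrite (big_rem l) //= lerDl sumr_ge0 // => z _; apply: sqrtr_ge0.
Qed.

Lemma real_eigenvalue_le_spectral_radius (B : 'M[R]_N) (u : R) (v : 'rV[R]_N) :
  v != 0 -> v *m B = u *: v -> `|u| <= spectral_radius B.
Proof.
move=> v_neq0 vB.
have ev : eigenvalue (map_mx (fun a : R => (a%:C)%C) B) (u%:C)%C.
  apply/eigenvalueP; exists (map_mx (real_complex R) v).
    by rewrite -map_mxM vB map_mxZ.
  by rewrite map_mx_eq0.
have -> : `|u| = cmodulus (u%:C)%C by rewrite /cmodulus /= expr0n addr0 sqrtr_sqr.
by apply: ub_le_sup; [exact: spectral_moduli_bounded | exists (u%:C)%C].
Qed.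

Lemma nonsingular_Mmatrix_addscalar_unit (A : 'M[R]_N) (t : R) :
  nonsingular_Mmatrix A -> 0 <= t -> A + t%:M \in unitmx.
Proof.
move=> [[_ [s [B [_ [-> rhoB]]]]] Au]; rewrite le0r => /orP[/eqP -> | t_gt0].
  by rewrite raddf0 addr0.
rewrite addrAC -raddfD /=; apply: contraT.
rewrite unitmxE unitfE negbK => /det0P [v v_neq0 vC].
have vB : v *m B = (s + t) *: v.
  by apply/eqP; rewrite eq_sym -subr_eq0 -mul_mx_scalar -mulmxBr vC.
have := real_eigenvalue_le_spectral_radius v_neq0 vB.
have := ler_norm (s + t); lra.
Qed.

End SpectralRadius.

Lemma nonsingular_Mmatrix_semipositive (R : realType) (N : nat) (A : 'M[R]_N) :
  nonsingular_Mmatrix A -> semipositive A.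
Proof.
move=> nsA; have ZA : Zmatrix A by case: nsA => [[]].
set E := [set t : R | 0 <= t /\ semipositive (A + t%:M)]%classic.
have [t0 t0_ge0 spt0] := semipositiveDscalar_large A.
have E_sup : (E !=set0)%classic /\ has_lbound E by split; [exists t0 | exists 0 => t []].
set tau := inf E.
have tau_ge0 : 0 <= tau by apply: lb_le_inf E_sup.1 _ => t [].
have sp_above h : 0 < h -> semipositive (A + (tau + h)%:M).
  move=> h_gt0; have [e [e_ge0 spe] e_lt] := inf_adherent h_gt0 E_sup.
  have -> : tau + h = e + (tau + h - e) by rewrite addrCA subrr addr0.
  by rewrite raddfD addrA; apply: (semipositiveDscalar spe); rewrite subr_ge0 (ltW e_lt).
have sp_tau : semipositive (A + tau%:M).
  have Cu := nonsingular_Mmatrix_addscalar_unit nsA tau_ge0.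
  apply: (Zmatrix_invmx_ge0_semipositive (Zmatrix_addscalar ZA tau) Cu).
  apply: (invmx_mulmx_ge0_limit Cu) => h h_gt0.
  have sph := sp_above h h_gt0.
  exists (invmx (A + (tau + h)%:M) *m const_mx 1).
    by apply: (Zmatrix_semipositive_invmx_ge0 (Zmatrix_addscalar ZA _) sph) => i; rewrite mxE.
  rewrite -addrA -raddfD mulmxA mulmxV ?mul1mx //.
  exact: Zmatrix_semipositive_unit (Zmatrix_addscalar ZA _) sph.
suff tau0 : tau = 0 by move: sp_tau; rewrite tau0 raddf0 addr0.
apply/eqP; rewrite eq_le tau_ge0 andbT leNgt; apply/negP => tau_gt0.
have [e e_gt0 spe] := semipositiveBscalar sp_tau.
set m := Num.min e tau.
have m_gt0 : 0 < m by rewrite lt_min e_gt0.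
have : E (tau - m).
  split; first by rewrite subr_ge0 ge_min lexx orbT.
  have -> : tau - m = tau - e + (e - m) by rewrite subrKA.
  by rewrite raddfD raddfB /= !addrA; apply: semipositiveDscalar spe _; rewrite subr_ge0 ge_min lexx.
by move/(ge_inf E_sup.2); rewrite -/tau; lra.
Qed.

Section RealContinuity.
Variable R : realType.

Lemma powR_continuous (p b : R) : 0 < b -> {for b, continuous (fun a : R => a `^ p)}.
Proof.
move=> b_gt0; apply: differentiable_continuous; apply/derivable1_diffP.
by apply: ex_derive; apply: is_derive1_powR.
Qed.

Lemma continuous_le_of_approx (f : R -> R) (b u : R) : {for b, continuous f} ->
  (forall d, 0 < d -> exists2 a, b - d < a <= b & u <= f a) -> u <= f b.
Proof.
move=> fc approx; rewrite leNgt; apply/negP => fb_lt.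
have /nbhs_ballP[d /= d_gt0 near_b] := @cvgr_lt _ _ _ (nbhs_filter b) f _ fc _ fb_lt.
have [a /andP[a_gt a_le] ua] := approx d d_gt0.
have : `|b - a| < d by rewrite ger0_norm ?subr_ge0 // ltrBlDr -ltrBlDl.
by move=> /near_b; lra.
Qed.

Lemma continuous_lt_right (f : R -> R) (b u : R) : {for b, continuous f} ->
  u < f b -> exists2 d, 0 < d & u < f (b + d).
Proof.
move=> fc u_lt; have /nbhs_ballP[d /= d_gt0 near_b] := @cvgr_gt _ _ _ (nbhs_filter b) f _ fc _ u_lt.
exists (d / 2); first by rewrite divr_gt0.
apply: near_b; rewrite /ball /= opprD addNKr normrN ger0_norm ?divr_ge0 ?(ltW d_gt0) // ltr_pdivrMr //; lra.
Qed.

Lemma le1_of_le_powR (p t : R) : p < 1 -> 0 < t -> t <= t `^ p -> t <= 1.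
Proof.
move=> p_lt1 t_gt0; rewrite -ler_ln ?posrE ?powR_gt0 // ln_powR => ln_le.
by rewrite leNgt; apply/negP => /ln_gt0; nra.
Qed.

Lemma powR_factor (p c : R) : 0 < c -> c = c `^ p * c `^ (1 - p).
Proof.
move=> c_gt0; rewrite -powRD; last by rewrite implybE (gt_eqF c_gt0) orbT.
by rewrite addrC subrK powRr1 // (ltW c_gt0).
Qed.

Lemma exists_powR_eq (q K : R) : q != 0 -> 0 < K -> exists2 c, 0 < c & c `^ q = K.
Proof.
move=> q_neq0 K_gt0; exists (K `^ q^-1); first exact: powR_gt0.
by rewrite -powRrM mulVf // powRr1 // (ltW K_gt0).
Qed.

End RealContinuity.

Section PowerEquation.
Variables (R : realType) (N : nat) (A : 'M[R]_N) (p : R).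
Hypotheses (ZA : Zmatrix A) (p_lt1 : p < 1).

Definition subsolution (x : 'cV[R]_N) := vpos x /\ vle (A *m x) (vpow x p).
Definition supersolution (y : 'cV[R]_N) := vpos y /\ vle (vpow y p) (A *m y).

Lemma subsolution_le_supersolution x y :
  subsolution x -> supersolution y -> vle x y.
Proof.
move=> [xp Axp] [yp Ayp] i.
have [t [k [xt xkt tA]]] := Zmatrix_max_ratio ZA x i yp.
have t_gt0 : 0 < t by rewrite -(pmulr_lgt0 _ (yp k)) -xkt.
suff t_le1 : t <= 1 by have := xt i; have := yp i; nra.
apply: (le1_of_le_powR p_lt1 t_gt0).
have Ayk_gt0 : 0 < (A *m y) k 0 by apply: lt_le_trans (Ayp k); rewrite mxE powR_gt0.
rewrite -(ler_pM2r Ayk_gt0); apply: le_trans tA _.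
apply: le_trans (Axp k) _; rewrite mxE xkt powRM ?(ltW t_gt0) ?(ltW (yp k)) //.
by apply: ler_wpM2l; [exact: powR_ge0 | have := Ayp k; rewrite mxE].
Qed.

Let one_minus_p_neq0 : 1 - p != 0.
Proof. by rewrite subr_eq0 eq_sym lt_eqF. Qed.

Lemma mulmx_scale_powR (v : 'cV[R]_N) c i : 0 < c ->
  (A *m (c *: v)) i 0 = c `^ p * (c `^ (1 - p) * (A *m v) i 0).
Proof. by move=> c_gt0; rewrite -scalemxAr mxE mulrA -powR_factor. Qed.

Lemma vpow_scale (v : 'cV[R]_N) c i : 0 < c -> 0 <= v i 0 ->
  vpow (c *: v) p i 0 = c `^ p * v i 0 `^ p.
Proof. by move=> c_gt0 v_ge0; rewrite !mxE powRM // (ltW c_gt0). Qed.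

Lemma semipositive_scaled_subsolution v : vpos v -> vpos (A *m v) ->
  exists2 c, 0 < c & subsolution (c *: v).
Proof.
move=> vp Avp.
have [e e_gt0 e_lt] :=
  exists_pos_lt_all (fun i => divr_gt0 (powR_gt0 p (vp i)) (Avp i)).
have [c c_gt0 ce] := exists_powR_eq one_minus_p_neq0 e_gt0.
exists c => //; split=> i; first by rewrite mxE mulr_gt0.
rewrite mulmx_scale_powR // vpow_scale ?(ltW (vp i)) // ler_pM2l ?powR_gt0 // ce.
by rewrite -ler_pdivlMr ?Avp // (ltW (e_lt i)).
Qed.

Lemma semipositive_scaled_supersolution v : vpos v -> vpos (A *m v) ->
  exists2 c, 0 < c & supersolution (c *: v).
Proof.
move=> vp Avp.
have [K K_gt0 K_gt] := exists_gt_all (fun i => v i 0 `^ p / (A *m v) i 0).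
have [c c_gt0 cK] := exists_powR_eq one_minus_p_neq0 K_gt0.
exists c => //; split=> i; first by rewrite mxE mulr_gt0.
rewrite mulmx_scale_powR // vpow_scale ?(ltW (vp i)) // ler_pM2l ?powR_gt0 // cK.
by rewrite -ler_pdivrMr ?Avp // (ltW (K_gt i)).
Qed.

Definition max_subsolution : 'cV[R]_N :=
  \col_i sup [set x i 0 | x in subsolution]%classic.

Section MaximalSubsolution.
Variables (x0 y : 'cV[R]_N).
Hypotheses (x0_sub : subsolution x0) (y_super : supersolution y).

Lemma has_sup_subsolution_component i :
  has_sup [set x i 0 | x in subsolution]%classic.
Proof.
split; first by exists (x0 i 0), x0.
by exists (y i 0) => _ [x x_sub <-]; apply: subsolution_le_supersolution.
Qed.

Lemma subsolution_le_max x : subsolution x -> vle x max_subsolution.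
Proof.
move=> x_sub i; rewrite mxE.
by apply: ub_le_sup; [exact: (has_sup_subsolution_component i).2 | exists x].
Qed.

Lemma max_subsolution_pos : vpos max_subsolution.
Proof. by move=> i; apply: lt_le_trans (x0_sub.1 i) (subsolution_le_max x0_sub i). Qed.

Lemma max_subsolution_approx i d : 0 < d ->
  exists2 x, subsolution x & max_subsolution i 0 - d < x i 0.
Proof.
move=> d_gt0; have [_ [x x_sub <-]] := sup_adherent d_gt0 (has_sup_subsolution_component i).
by exists x; rewrite // mxE.
Qed.

Local Notation xs := max_subsolution.

Lemma continuous_row_defect i :
  {for xs i 0, continuous (fun a => a `^ p - A i i * a)}.
Proof.
apply: continuousB; first exact: powR_continuous (max_subsolution_pos i).
exact: mulrl_continuous.
Qed.

Lemma max_subsolution_sub : vle (A *m xs) (vpow xs p).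
Proof.
move=> i; rewrite [vpow _ _ _ _]mxE.
suff : (A *m xs) i 0 - A i i * xs i 0 <=
       (fun a => a `^ p - A i i * a) (xs i 0) by rewrite /=; lra.
apply: (continuous_le_of_approx (@continuous_row_defect i)) => d d_gt0.
have [x x_sub x_gt] := max_subsolution_approx i d_gt0.
exists (x i 0); first by rewrite x_gt (subsolution_le_max x_sub i).
have : (A *m (xs - x)) i 0 <= A i i * (xs - x) i 0.
  apply: Zmatrix_mulmx_le_diag => // j _.
  by rewrite [_ j 0]mxE [(- x) _ _]mxE subr_ge0; apply: subsolution_le_max.
have := x_sub.2 i; rewrite mulmxBr !mxE; lra.
Qed.

Lemma max_subsolution_solution : A *m xs = vpow xs p.
Proof.
apply/matrixP => i j; rewrite (ord1 j); apply/eqP; rewrite eq_le max_subsolution_sub /=.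
rewrite leNgt; apply/negP => defect_lt.
have [d d_gt0] : exists2 d, 0 < d & (A *m xs) i 0 - A i i * xs i 0 <
                                   (fun a => a `^ p - A i i * a) (xs i 0 + d).
  apply: (continuous_lt_right (@continuous_row_defect i)) => /=.
  by move: defect_lt; rewrite [vpow _ _ _ _]mxE; lra.
move=> /= d_defect.
(* Raising the i-th component of xs by d yields a larger subsolution. *)
set z := xs + d *: delta_mx i 0.
have zE k : z k 0 = xs k 0 + d * (k == i)%:R.
  by rewrite [z k 0]mxE; congr (_ + _); rewrite !mxE andbT.
have AzE k : (A *m z) k 0 = (A *m xs) k 0 + d * A k i.
  by rewrite mulmxDr -scalemxAr -colE !mxE.
have z_sub : subsolution z.
  split=> k.
    by rewrite zE ltr_wpDr ?max_subsolution_pos // mulr_ge0 ?ler0n // (ltW d_gt0).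
  rewrite AzE [vpow _ _ _ _]mxE zE.
  have [->|ki] := eqVneq k i; first by rewrite mulr1; lra.
  have := max_subsolution_sub k; rewrite [vpow _ _ _ _]mxE mulr0 addr0.
  have : d * A k i <= 0 by rewrite mulr_ge0_le0 ?ZA // (ltW d_gt0).
  lra.
have := subsolution_le_max z_sub i; rewrite zE eqxx mulr1; lra.
Qed.

End MaximalSubsolution.

Lemma semipositive_power_solution :
  semipositive A -> exists2 x, vpos x & A *m x = vpow x p.
Proof.
move=> [v vp Avp].
have [c _ x0_sub] := semipositive_scaled_subsolution vp Avp.
have [C _ y_super] := semipositive_scaled_supersolution vp Avp.
exists max_subsolution.
  exact: max_subsolution_pos x0_sub y_super.
exact: max_subsolution_solution x0_sub y_super.
Qed.

End PowerEquation.

Theorem proposition3p5 (R : realType) (N : nat) (A : 'M[R]_N) (p : R) :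
  nonsingular_Mmatrix A -> p < 1 ->
  (forall x y : 'cV[R]_N,
      vpos x -> vle (A *m x) (vpow x p) ->
      vpos y -> vle (vpow y p) (A *m y) ->
      vle x y) /\
  (exists! x : 'cV[R]_N, vpos x /\ A *m x = vpow x p).
Proof.
move=> nsA p_lt1; have ZA : Zmatrix A by case: nsA => [[]].
have comparison x y : vpos x -> vle (A *m x) (vpow x p) ->
    vpos y -> vle (vpow y p) (A *m y) -> vle x y.
  move=> xp Axp yp Ayp.
  by apply: (subsolution_le_supersolution ZA p_lt1); split.
split=> //.
have [x xp Ax] :=
  semipositive_power_solution ZA p_lt1 (nonsingular_Mmatrix_semipositive nsA).
have solution_le u w : vpos u -> A *m u = vpow u p ->
    vpos w -> A *m w = vpow w p -> vle u w.
  by move=> up Au wp Aw; apply: comparison => // i; rewrite ?Au ?Aw.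
exists x; split=> // x' [x'p Ax'].
apply/matrixP => i j; rewrite (ord1 j); apply/le_anti/andP.
by split; apply: solution_le.
Qed.
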